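(* For every $(a',b',c')\in\mathbb{C}^3$, the formal deformation $(\{\cdot,\cdot\}^{[a',b',c']}_n)_{n\ge0}$ of $\widetilde J$ is modular-isomorphic to one of the following: (1) $(\{\cdot,\cdot\}^{[1,b,c]}_n)_{n\ge0}$ for some $(b,c)\in\mathbb{C}^2$; (2) $(\{\cdot,\cdot\}^{[0,1,c]}_n)_{n\ge0}$ for some $c\in\mathbb{C}$; (3) $(\{\cdot,\cdot\}^{[0,0,c]}_n)_{n\ge0}$ for some $c\in\mathbb{C}$. Moreover, any two distinct deformations in this list (distinct families, or the same family with different parameter values) are not modular-isomorphic.
   Context: Let $\widetilde J=\mathbb{C}[E_4,E_6,A,B]$ be the polynomial algebra in four algebraically independent variables, bigraded by weight and index, where $E_4$ has weight $4$ and index $0$, $E_6$ has weight $6$ and index $0$, $A$ has weight $-2$ and index $1$, $B$ has weight $0$ and index $1$; $\widetilde J_{k,p}$ denotes the homogeneous component of weight $k$ and index $p$. (This is the algebra of weak Jacobi forms of even weight on $\mathrm{SL}(2,\mathbb{Z})$.) For $(a,b)\in\mathbb{C}^2$, $S_{a,b}$ is the derivation of $\widetilde J$ with $S_{a,b}(E_4)=-\tfrac13E_6$, $S_{a,b}(E_6)=-\tfrac12E_4^2$, $S_{a,b}(A)=aB$, $S_{a,b}(B)=bE_4A$. For $c\in\mathbb{C}$ and $n\ge0$, $\{\cdot,\cdot\}^{[a,b,c]}_n$ is the bilinear map on $\widetilde J$ defined on homogeneous $f\in\widetilde J_{k,p}$, $g\in\widetilde J_{\ell,q}$ by $\{f,g\}^{[a,b,c]}_n=\sum_{r=0}^n(-1)^r\binom{k+cp+n-1}{n-r}\binom{\ell+cq+n-1}{r}S_{a,b}^r(f)\,S_{a,b}^{n-r}(g)$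 (complex binomial coefficients $\binom{x}{m}=x(x-1)\cdots(x-m+1)/m!$). Each such sequence is a formal deformation of $\widetilde J$. Two such formal deformations $(\{\cdot,\cdot\}^{[a,b,c]}_n)_n$ and $(\{\cdot,\cdot\}^{[a',b',c']}_n)_n$ are modular-isomorphic if there is a $\mathbb{C}$-linear bijection $\phi:\widetilde J\to\widetilde J$ mapping each $\widetilde J_{k,p}$ into $\widetilde J_{k,p}$ and such that $\phi(\{f,g\}^{[a,b,c]}_j)=\{\phi(f),\phi(g)\}^{[a',b',c']}_j$ for all $j\ge0$ and $f,g\in\widetilde J$. *)

From HB Require Import structures.
From mathcomp Require Import all_boot all_order all_algebra.
Set Implicit Arguments. Unset Strict Implicit. Unset Printing Implicit Defensive.
Import Order.TTheory GRing.Theory Num.Theory.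
Local Open Scope ring_scope.

Section JacobiAlgebra.
Variable C : numClosedFieldType.

(* J~ = C[E4,E6,A,B] as iterated polynomials: outermost variable B,
   then A, then E6, innermost E4.  The coefficient of
   E4^i E6^j A^l B^m in f is  f`_m`_l`_j`_i. *)
Definition Jt := {poly {poly {poly {poly C}}}}.

Definition cst (x : C) : Jt := x%:P%:P%:P%:P.
Definition vE4 : Jt := ('X : {poly C})%:P%:P%:P.
Definition vE6 : Jt := ('X : {poly {poly C}})%:P%:P.
Definition vA  : Jt := ('X : {poly {poly {poly C}}})%:P.
Definition vB  : Jt := 'X.

Definition jcoef (f : Jt) (i j l m : nat) : C := f`_m`_l`_j`_i.

Definition mweight (i j l m : nat) : int := (4 * i + 6 * j)%:Z - (2 * l)%:Z.
Definition mindex (i j l m : nat) : int := (l + m)%:Z.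

Definition mono (i j l m : nat) : Jt := vE4 ^+ i * vE6 ^+ j * vA ^+ l * vB ^+ m.

Definition homog (k p : int) (f : Jt) : Prop :=
  forall i j l m, jcoef f i j l m != 0 -> mweight i j l m = k /\ mindex i j l m = p.

Definition dB (f : Jt) : Jt := deriv f.
Definition dA (f : Jt) : Jt := map_poly (@deriv _) f.
Definition dE6 (f : Jt) : Jt := map_poly (map_poly (@deriv _)) f.
Definition dE4 (f : Jt) : Jt := map_poly (map_poly (map_poly (@deriv _))) f.

Definition Sder (a b : C) (f : Jt) : Jt :=
  dE4 f * (cst (- (1 / 3%:R)) * vE6) + dE6 f * (cst (- (1 / 2%:R)) * vE4 ^+ 2)
  + dA f * (cst a * vB) + dB f * (cst b * vE4 * vA).

Definition binC (x : C) (m : nat) : C :=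
  (\prod_(i < m) (x - i%:R)) / (m`!)%:R.

(* bracket on homogeneous f in J~_{k,p}, g in J~_{l,q} *)
Definition hbracket (a b c : C) (n : nat) (k p l q : int) (f g : Jt) : Jt :=
  \sum_(r < n.+1)
     cst ((-1) ^+ r * binC (k%:~R + c * p%:~R + n%:R - 1) (n - r)
                    * binC (l%:~R + c * q%:~R + n%:R - 1) r)
     * (iter r (Sder a b) f * iter (n - r) (Sder a b) g).

Definition mbracket (a b c : C) (n : nat) (i1 j1 l1 m1 i2 j2 l2 m2 : nat) : Jt :=
  hbracket a b c n (mweight i1 j1 l1 m1) (mindex i1 j1 l1 m1)
                   (mweight i2 j2 l2 m2) (mindex i2 j2 l2 m2)
                   (mono i1 j1 l1 m1) (mono i2 j2 l2 m2).

Definition bracket (a b c : C) (n : nat) (f g : Jt) : Jt :=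
  \sum_(m1 < size f) \sum_(l1 < size f`_m1) \sum_(j1 < size f`_m1`_l1)
  \sum_(i1 < size f`_m1`_l1`_j1)
  \sum_(m2 < size g) \sum_(l2 < size g`_m2) \sum_(j2 < size g`_m2`_l2)
  \sum_(i2 < size g`_m2`_l2`_j2)
    cst (jcoef f i1 j1 l1 m1 * jcoef g i2 j2 l2 m2)
    * mbracket a b c n i1 j1 l1 m1 i2 j2 l2 m2.

Definition modiso (t t' : C * C * C) : Prop :=
  let: (a, b, c) := t in let: (a', b', c') := t' in
  exists phi : Jt -> Jt,
    [/\ bijective phi,
        (forall x y, phi (x + y) = phi x + phi y),
        (forall (s : C) x, phi (cst s * x) = cst s * phi x),
        (forall k p f, homog k p f -> homog k p (phi f)) &
        (forall n f g, phi (bracket a b c n f g) = bracket a' b' c' n (phi f) (phi g))].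

Definition canonical_triple (t : C * C * C) : Prop :=
  let: (a, b, c) := t in a = 1 \/ (a = 0 /\ b = 1) \/ (a = 0 /\ b = 0).

End JacobiAlgebra.

(* Rescaling B by a nonzero mu, i.e. f(E4,E6,A,B) |-> f(E4,E6,A,mu B), turns S_{a,b}
   into S_{a mu, b/mu} and leaves weights and indices alone, so it is a modular
   isomorphism from [a,b,c] to [a mu, b/mu, c]; a suitable mu brings every triple into
   one of the three families.
   Conversely, E4, E6, A and B are the only monomials of their bidegrees, so a modular
   isomorphism multiplies them by nonzero scalars alpha, gamma, beta, mu.  It respects
   products (the brackets of order 0), hence acts diagonally on the monomials
   E4^3, E6^2, E4 B, E6 A, E4^2 A, E6 B.  Comparing coefficients in the first-order
   brackets {E4,E6}_1 = -2 E4^3 + 2 E6^2, {E4,A}_1 = 4a E4 B + (c-2)/3 E6 A and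
   {E4,B}_1 = 4b E4^2 A + c/3 E6 B gives alpha = gamma = 1, c = c', a mu = a' beta and
   b beta = b' mu, which no two distinct members of the list satisfy. *)

From HB Require Import structures.
From mathcomp Require Import all_boot all_order all_algebra.
From mathcomp Require Import ring zify.
Set Implicit Arguments. Unset Strict Implicit. Unset Printing Implicit Defensive.
Import Order.TTheory GRing.Theory Num.Theory.
Local Open Scope ring_scope.

Lemma coef_comp_polyCX (R : comNzRingType) (k : R) (p : {poly R}) m :
  (p \Po (k%:P * 'X))`_m = k ^+ m * p`_m.
Proof.
elim/poly_ind: p m => [|p c IHp] m; first by rewrite comp_poly0 !coef0 mulr0.
rewrite comp_poly_MXaddC mulrCA !coefD coefCM !coefMX !coefC.
by case: m => [|m] /=; rewrite ?mulr0 ?add0r ?addr0 ?expr0 ?mul1r // IHp exprS mulrA.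
Qed.

Lemma coef_neq0_size (R : nzSemiRingType) (p : {poly R}) k : p`_k != 0 -> (k < size p)%N.
Proof. by rewrite ltnNge; apply: contra => /(nth_default 0) ->. Qed.

Lemma mulr_expr4 (R : comNzRingType) (x y z w : R) i j l m i' j' l' m' :
  x ^+ i * y ^+ j * z ^+ l * w ^+ m * (x ^+ i' * y ^+ j' * z ^+ l' * w ^+ m') =
  x ^+ (i + i') * y ^+ (j + j') * z ^+ (l + l') * w ^+ (m + m').
Proof. rewrite !exprD; ring. Qed.

Lemma natr_eqS_mulrn (R : nzSemiRingType) (P : bool) i i0 :
  ((i.+1 == i0) && P)%:R *+ i.+1 = i0%:R * ((i == i0.-1) && P)%:R :> R.
Proof.
case: i0 => [|i0] /=; first by rewrite mul0r mul0rn.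
rewrite eqSS; case: eqP => [->|_] /=; last by rewrite mulr0 mul0rn.
by case: P; rewrite ?mulr1 ?mulr0 ?mul0rn.
Qed.

Lemma morph_sum4 (R S : pzSemiRingType) (g : R -> S) (d1 d2 d3 d4 x1 x2 x3 x4 : R) :
  {morph g : x y / x + y} -> {morph g : x y / x * y} ->
  g (d1 * x1 + d2 * x2 + d3 * x3 + d4 * x4) =
  g d1 * g x1 + g d2 * g x2 + g d3 * g x3 + g d4 * g x4.
Proof. by move=> gD gM; rewrite !gD !gM. Qed.

Lemma sum_ord_only (V : nmodType) n (F : 'I_n -> V) k (lt_kn : (k < n)%N) :
  (forall i : 'I_n, (i : nat) != k -> F i = 0) -> \sum_(i < n) F i = F (Ordinal lt_kn).
Proof. by move=> F0; rewrite (bigD1 (Ordinal lt_kn)) //= big1 ?addr0. Qed.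

Lemma eq_of_scaled_subr (F : idomainType) (k x y u v : F) :
  k != 0 -> (x - y) * k = u - v -> u = v -> x = y.
Proof.
move=> k0 E uv; apply/eqP; rewrite -subr_eq0; apply/eqP/(mulIf k0).
by rewrite E uv subrr mul0r.
Qed.

(** * Monomials, coefficients and the derivation *)

Section Monomials.
Variable C : numClosedFieldType.
Local Notation Jt := (Jt C).
Local Notation mono := (mono C).

Lemma jcoef_ext (f g : Jt) :
  (forall i j l m, jcoef f i j l m = jcoef g i j l m) -> f = g.
Proof.
move=> fg; apply/polyP=> m; apply/polyP=> l; apply/polyP=> j; apply/polyP=> i.
exact: fg.
Qed.

Lemma jcoefD (f g : Jt) i j l m :
  jcoef (f + g) i j l m = jcoef f i j l m + jcoef g i j l m.
Proof. by rewrite /jcoef !coefD. Qed.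

Lemma jcoef_cstM s (f : Jt) i j l m : jcoef (cst s * f) i j l m = s * jcoef f i j l m.
Proof. by rewrite /jcoef /cst !coefCM. Qed.

Lemma cstM (x y : C) : cst (x * y) = cst x * cst y.
Proof. by rewrite /cst !polyCM. Qed.

Lemma cst0M (f : Jt) : cst 0 * f = 0.
Proof. by apply: jcoef_ext => i j l m; rewrite jcoef_cstM mul0r /jcoef !coef0. Qed.

Lemma cst1M (f : Jt) : cst 1 * f = f.
Proof. by apply: jcoef_ext => i j l m; rewrite jcoef_cstM mul1r. Qed.

Lemma cstMA s t (f : Jt) : cst s * (cst t * f) = cst (s * t) * f.
Proof. by rewrite cstM mulrA. Qed.

Lemma jcoef_mono i0 j0 l0 m0 i j l m :
  jcoef (mono i0 j0 l0 m0) i j l m = [&& i == i0, j == j0, l == l0 & m == m0]%:R.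
Proof.
have -> : mono i0 j0 l0 m0 =
    (((('X^i0 : {poly C})%:P * 'X^j0)%:P * 'X^l0)%:P) * 'X^m0.
  by rewrite /mono /vE4 /vE6 /vA /vB !rmorphXn /= !rmorphM /= !rmorphXn.
rewrite /jcoef coefCM coefXn; case: (m == m0); last by rewrite !andbF mulr0 !coef0.
rewrite mulr1 coefCM coefXn; case: (l == l0); last by rewrite !andbF mulr0 !coef0.
rewrite mulr1 coefCM coefXn; case: (j == j0); last by rewrite !andbF mulr0 !coef0.
by rewrite mulr1 coefXn !andbT.
Qed.

Lemma monoM i j l m i' j' l' m' :
  mono i j l m * mono i' j' l' m' = mono (i + i') (j + j') (l + l') (m + m').
Proof.
rewrite /mono; move: (vE4 C) (vE6 C) (vA C) (vB C) => x y z w; exact: mulr_expr4.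
Qed.

Lemma mono_neq0 i j l m : mono i j l m != 0.
Proof.
apply: contra_neq (oner_neq0 C) => M0.
by move: (jcoef_mono i j l m i j l m); rewrite M0 !eqxx /jcoef !coef0 => /esym.
Qed.

Lemma cst_monoM s i j l m i' j' l' m' :
  cst s * mono i j l m * mono i' j' l' m' = cst s * mono (i + i') (j + j') (l + l') (m + m').
Proof. by rewrite -mulrA monoM. Qed.

Lemma mono_cstM s i j l m i' j' l' m' :
  mono i j l m * (cst s * mono i' j' l' m') = cst s * mono (i + i') (j + j') (l + l') (m + m').
Proof. by rewrite mulrCA monoM. Qed.

Lemma cst_mono_cstM s t i j l m i' j' l' m' :
  cst s * mono i j l m * (cst t * mono i' j' l' m') =
  cst (s * t) * mono (i + i') (j + j') (l + l') (m + m').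
Proof. by rewrite -mulrA mono_cstM cstMA. Qed.

(* Here and below the plain [rewrite ->] is used where several distinct monomials
   occur: it matches syntactically, whereas ssreflect's rewrite compares candidate
   subterms up to conversion and would unfold distinct monomials into polynomial
   products. *)
Lemma cst_mono2_inj (s1 s2 t1 t2 : C) i1 j1 l1 m1 i2 j2 l2 m2 :
  (i1, j1, l1, m1) != (i2, j2, l2, m2) ->
  cst s1 * mono i1 j1 l1 m1 + cst s2 * mono i2 j2 l2 m2 =
    cst t1 * mono i1 j1 l1 m1 + cst t2 * mono i2 j2 l2 m2 ->
  s1 = t1 /\ s2 = t2.
Proof.
move=> ne E; have := congr1 (fun f => jcoef f i2 j2 l2 m2) E.
move: {E}(congr1 (fun f => jcoef f i1 j1 l1 m1) E); cbv beta.
rewrite -> !jcoefD, !jcoef_cstM, !jcoef_mono, !eqxx.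
have ne21 := ne; rewrite eq_sym in ne21.
move: ne ne21; rewrite !xpair_eqE -!andbA => /negPf-> /negPf->.
by rewrite /= !mulr1 !mulr0 !addr0 !add0r => -> ->.
Qed.

Lemma homog_mono i j l m : homog (mweight i j l m) (mindex i j l m) (mono i j l m).
Proof.
move=> i' j' l' m'; rewrite jcoef_mono.
by case: and4P => [[/eqP-> /eqP-> /eqP-> /eqP->] | _]; rewrite ?eqxx.
Qed.

Definition sole_mono i0 j0 l0 m0 := forall i j l m,
  mweight i j l m = mweight i0 j0 l0 m0 -> mindex i j l m = mindex i0 j0 l0 m0 ->
  [&& i == i0, j == j0, l == l0 & m == m0].

Lemma sole_monoE4 : sole_mono 1 0 0 0.
Proof. move=> i j l m; rewrite /mweight /mindex; lia. Qed.

Lemma sole_monoE6 : sole_mono 0 1 0 0.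
Proof. move=> i j l m; rewrite /mweight /mindex; lia. Qed.

Lemma sole_monoA : sole_mono 0 0 1 0.
Proof. move=> i j l m; rewrite /mweight /mindex; lia. Qed.

Lemma sole_monoB : sole_mono 0 0 0 1.
Proof. move=> i j l m; rewrite /mweight /mindex; lia. Qed.

Lemma homog_sole_mono f i0 j0 l0 m0 : sole_mono i0 j0 l0 m0 ->
  homog (mweight i0 j0 l0 m0) (mindex i0 j0 l0 m0) f ->
  f = cst (jcoef f i0 j0 l0 m0) * mono i0 j0 l0 m0.
Proof.
move=> sole hf; apply: jcoef_ext => i j l m; rewrite jcoef_cstM jcoef_mono.
have [/and4P[/eqP-> /eqP-> /eqP-> /eqP->]|off] := boolP [&& _, _, _ & _].
  by rewrite mulr1.
rewrite mulr0; apply/eqP; apply: contraNT off => /hf[w p]; exact: sole.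
Qed.

Lemma jcoef_dE4 (f : Jt) i j l m : jcoef (dE4 f) i j l m = jcoef f i.+1 j l m *+ i.+1.
Proof. by rewrite /jcoef /dE4 !coef_map /= coef_deriv. Qed.

Lemma jcoef_dE6 (f : Jt) i j l m : jcoef (dE6 f) i j l m = jcoef f i j.+1 l m *+ j.+1.
Proof. by rewrite /jcoef /dE6 !coef_map /= coef_deriv coefMn. Qed.

Lemma jcoef_dA (f : Jt) i j l m : jcoef (dA f) i j l m = jcoef f i j l.+1 m *+ l.+1.
Proof. by rewrite /jcoef /dA !coef_map /= coef_deriv !coefMn. Qed.

Lemma jcoef_dB (f : Jt) i j l m : jcoef (dB f) i j l m = jcoef f i j l m.+1 *+ m.+1.
Proof. by rewrite /jcoef /dB coef_deriv !coefMn. Qed.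

Lemma dE4_mono i j l m : dE4 (mono i j l m) = cst i%:R * mono i.-1 j l m.
Proof.
apply: jcoef_ext => i' j' l' m'.
by rewrite jcoef_dE4 jcoef_cstM !jcoef_mono natr_eqS_mulrn.
Qed.

Lemma dE6_mono i j l m : dE6 (mono i j l m) = cst j%:R * mono i j.-1 l m.
Proof.
apply: jcoef_ext => i' j' l' m'; rewrite jcoef_dE6 jcoef_cstM !jcoef_mono.
by rewrite !(andbCA (i' == i)) natr_eqS_mulrn.
Qed.

Lemma dA_mono i j l m : dA (mono i j l m) = cst l%:R * mono i j l.-1 m.
Proof.
apply: jcoef_ext => i' j' l' m'; rewrite jcoef_dA jcoef_cstM !jcoef_mono.
by rewrite !(andbCA (i' == i)) !(andbCA (j' == j)) natr_eqS_mulrn.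
Qed.

Lemma dB_mono i j l m : dB (mono i j l m) = cst m%:R * mono i j l m.-1.
Proof.
apply: jcoef_ext => i' j' l' m'; rewrite jcoef_dB jcoef_cstM !jcoef_mono.
by rewrite !andbA [_ && (_ == m)]andbC natr_eqS_mulrn andbC.
Qed.

Lemma dE4_cstM s (f : Jt) : dE4 (cst s * f) = cst s * dE4 f.
Proof. by apply: jcoef_ext => *; rewrite jcoef_dE4 !jcoef_cstM jcoef_dE4 mulrnAr. Qed.

Lemma dE6_cstM s (f : Jt) : dE6 (cst s * f) = cst s * dE6 f.
Proof. by apply: jcoef_ext => *; rewrite jcoef_dE6 !jcoef_cstM jcoef_dE6 mulrnAr. Qed.

Lemma dA_cstM s (f : Jt) : dA (cst s * f) = cst s * dA f.
Proof. by apply: jcoef_ext => *; rewrite jcoef_dA !jcoef_cstM jcoef_dA mulrnAr. Qed.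

Lemma dB_cstM s (f : Jt) : dB (cst s * f) = cst s * dB f.
Proof. by apply: jcoef_ext => *; rewrite jcoef_dB !jcoef_cstM jcoef_dB mulrnAr. Qed.

Lemma Sder_cstM a b s (f : Jt) : Sder a b (cst s * f) = cst s * Sder a b f.
Proof. by rewrite /Sder dE4_cstM dE6_cstM dA_cstM dB_cstM -!mulrA -!mulrDr. Qed.

Lemma iter_Sder_cstM a b s (f : Jt) r :
  iter r (Sder a b) (cst s * f) = cst s * iter r (Sder a b) f.
Proof. by elim: r => //= r ->; rewrite Sder_cstM. Qed.

Lemma Sder_mono a b i j l m : Sder a b (mono i j l m) =
    cst (i%:R * - (1 / 3%:R)) * mono i.-1 j.+1 l m
  + cst (j%:R * - (1 / 2%:R)) * mono i.+2 j.-1 l m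
  + cst (l%:R * a) * mono i j l.-1 m.+1
  + cst (m%:R * b) * mono i.+1 j l.+1 m.-1.
Proof.
have E6E : vE6 C = mono 0 1 0 0.
  rewrite /mono; move: (vE4 C) (vE6 C) (vA C) (vB C) => x y z w.
  by rewrite !expr0 expr1 mul1r !mulr1.
have E4sqE : vE4 C ^+ 2 = mono 2 0 0 0.
  rewrite /mono; move: (vE4 C) (vE6 C) (vA C) (vB C) => x y z w.
  by rewrite !expr0 !mulr1.
have BE : vB C = mono 0 0 0 1.
  rewrite /mono; move: (vE4 C) (vE6 C) (vA C) (vB C) => x y z w.
  by rewrite !expr0 expr1 !mul1r.
have E4AE : cst b * vE4 C * vA C = cst b * mono 1 0 1 0.
  rewrite /mono; move: (cst b) (vE4 C) (vE6 C) (vA C) (vB C) => u x y z w.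
  by rewrite !expr0 !expr1 !mulr1 mulrA.
rewrite /Sder E6E E4sqE BE E4AE dE4_mono dE6_mono dA_mono dB_mono !cst_mono_cstM.
by rewrite ?addn0 ?add0n ?addn1 ?addn2.
Qed.

Lemma Sder_E4 a b : Sder a b (mono 1 0 0 0) = cst (- (1 / 3%:R)) * mono 0 1 0 0.
Proof.
apply: jcoef_ext => i j l m; rewrite Sder_mono.
by rewrite -> !jcoefD, !jcoef_cstM, !jcoef_mono => /=; ring.
Qed.

Lemma Sder_E6 a b : Sder a b (mono 0 1 0 0) = cst (- (1 / 2%:R)) * mono 2 0 0 0.
Proof.
apply: jcoef_ext => i j l m; rewrite Sder_mono.
by rewrite -> !jcoefD, !jcoef_cstM, !jcoef_mono => /=; ring.
Qed.

Lemma Sder_A a b : Sder a b (mono 0 0 1 0) = cst a * mono 0 0 0 1.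
Proof.
apply: jcoef_ext => i j l m; rewrite Sder_mono.
by rewrite -> !jcoefD, !jcoef_cstM, !jcoef_mono => /=; ring.
Qed.

Lemma Sder_B a b : Sder a b (mono 0 0 0 1) = cst b * mono 1 0 1 0.
Proof.
apply: jcoef_ext => i j l m; rewrite Sder_mono.
by rewrite -> !jcoefD, !jcoef_cstM, !jcoef_mono => /=; ring.
Qed.

(** * The brackets on monomials *)

Lemma binC0 (x : C) : binC x 0 = 1.
Proof. by rewrite /binC big_ord0 divr1. Qed.

Lemma binC1 (x : C) : binC x 1 = x.
Proof. by rewrite /binC big_ord1 subr0 divr1. Qed.

Lemma hbracket0 a b c k p l q (f g : Jt) : hbracket a b c 0 k p l q f g = f * g.
Proof. by rewrite /hbracket big_ord1 /= !binC0 expr0 !mulr1 cst1M. Qed.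

Lemma hbracket1 a b c k p l q (f g : Jt) : hbracket a b c 1 k p l q f g =
  cst (k%:~R + c * p%:~R) * (f * Sder a b g) + cst (- (l%:~R + c * q%:~R)) * (Sder a b f * g).
Proof.
rewrite /hbracket big_ord_recr big_ord1 /= !binC0 !binC1 !addrK expr0 expr1.
by rewrite !mulr1 mul1r mulN1r.
Qed.

Lemma hbracket_cstM a b c n k p l q x y (f g : Jt) :
  hbracket a b c n k p l q (cst x * f) (cst y * g) =
  cst (x * y) * hbracket a b c n k p l q f g.
Proof.
rewrite /hbracket; rewrite -> mulr_sumr; apply: eq_bigr => r _.
rewrite -> !iter_Sder_cstM, (cstM x y).
move: (iter _ _ f) (iter _ _ g) (cst x) (cst y) (cst _) => F G u v w.
ring.
Qed.

Lemma mbracket1_Sder_mono a b c s t i1 j1 l1 m1 i2 j2 l2 m2 i1' j1' l1' m1' i2' j2' l2' m2' :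
  Sder a b (mono i1 j1 l1 m1) = cst s * mono i1' j1' l1' m1' ->
  Sder a b (mono i2 j2 l2 m2) = cst t * mono i2' j2' l2' m2' ->
  mbracket a b c 1 i1 j1 l1 m1 i2 j2 l2 m2 =
    cst (((mweight i1 j1 l1 m1)%:~R + c * (mindex i1 j1 l1 m1)%:~R) * t)
      * mono (i1 + i2') (j1 + j2') (l1 + l2') (m1 + m2')
  + cst (- ((mweight i2 j2 l2 m2)%:~R + c * (mindex i2 j2 l2 m2)%:~R) * s)
      * mono (i1' + i2) (j1' + j2) (l1' + l2) (m1' + m2).
Proof.
move=> S1 S2; rewrite /mbracket.
by rewrite -> hbracket1, S1, S2, mono_cstM, cst_monoM, !cstMA.
Qed.

Lemma mbracket1_E4E6 a b c : mbracket a b c 1 1 0 0 0 0 1 0 0 =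
  cst (- 2) * mono 3 0 0 0 + cst 2 * mono 0 2 0 0.
Proof.
rewrite (mbracket1_Sder_mono _ (Sder_E4 a b) (Sder_E6 a b)).
apply: jcoef_ext => i j l m; rewrite -> !jcoefD, !jcoef_cstM, !jcoef_mono.
by rewrite /mweight /mindex !addnE !mulnE /=; field.
Qed.

Lemma mbracket1_E4A a b c : mbracket a b c 1 1 0 0 0 0 0 1 0 =
  cst (4 * a) * mono 1 0 0 1 + cst ((c - 2) / 3) * mono 0 1 1 0.
Proof.
rewrite (mbracket1_Sder_mono _ (Sder_E4 a b) (Sder_A a b)).
apply: jcoef_ext => i j l m; rewrite -> !jcoefD, !jcoef_cstM, !jcoef_mono.
by rewrite /mweight /mindex !addnE !mulnE /=; field.
Qed.

Lemma mbracket1_E4B a b c : mbracket a b c 1 1 0 0 0 0 0 0 1 =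
  cst (4 * b) * mono 2 0 1 0 + cst (c / 3) * mono 0 1 0 1.
Proof.
rewrite (mbracket1_Sder_mono _ (Sder_E4 a b) (Sder_B a b)).
apply: jcoef_ext => i j l m; rewrite -> !jcoefD, !jcoef_cstM, !jcoef_mono.
by rewrite /mweight /mindex !addnE !mulnE /=; field.
Qed.

Definition msum (V : nmodType) (f : Jt) (F : nat -> nat -> nat -> nat -> V) : V :=
  \sum_(m < size f) \sum_(l < size f`_m) \sum_(j < size f`_m`_l)
  \sum_(i < size f`_m`_l`_j) F i j l m.

Lemma bracket_msum a b c n (f g : Jt) : bracket a b c n f g =
  msum f (fun i1 j1 l1 m1 => msum g (fun i2 j2 l2 m2 =>
    cst (jcoef f i1 j1 l1 m1 * jcoef g i2 j2 l2 m2) *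
    mbracket a b c n i1 j1 l1 m1 i2 j2 l2 m2)).
Proof. by []. Qed.

Lemma eq_msum (V : nmodType) (f : Jt) (F G : nat -> nat -> nat -> nat -> V) :
  (forall i j l m, F i j l m = G i j l m) -> msum f F = msum f G.
Proof.
move=> FG; apply: eq_bigr => m _; apply: eq_bigr => l _; apply: eq_bigr => j _.
by apply: eq_bigr => i _.
Qed.

Lemma msum_single (V : nmodType) (f : Jt) (F : nat -> nat -> nat -> nat -> V) i0 j0 l0 m0 :
  jcoef f i0 j0 l0 m0 != 0 ->
  (forall i j l m, ~~ [&& i == i0, j == j0, l == l0 & m == m0] -> F i j l m = 0) ->
  msum f F = F i0 j0 l0 m0.
Proof.
rewrite /jcoef => nz F0.
have nz3 : f`_m0`_l0`_j0 != 0 by apply: contraNneq nz => ->; rewrite coef0.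
have nz2 : f`_m0`_l0 != 0 by apply: contraNneq nz3 => ->; rewrite coef0.
have nz1 : f`_m0 != 0 by apply: contraNneq nz2 => ->; rewrite coef0.
rewrite /msum (sum_ord_only (coef_neq0_size nz1)) /= => [|m /negPf ne]; last first.
  by do 3!apply: big1 => ? _; apply: F0; rewrite ne !andbF.
rewrite (sum_ord_only (coef_neq0_size nz2)) /= => [|l /negPf ne]; last first.
  by do 2!apply: big1 => ? _; apply: F0; rewrite ne !andbF.
rewrite (sum_ord_only (coef_neq0_size nz3)) /= => [|j /negPf ne]; last first.
  by apply: big1 => ? _; apply: F0; rewrite ne !andbF.
by rewrite (sum_ord_only (coef_neq0_size nz)) // => i /negPf ne; apply: F0; rewrite ne.
Qed.

Lemma msum_scaled (V : nmodType) (f g : Jt) (u : nat -> C)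
    (F : nat -> nat -> nat -> nat -> V) :
  (forall m, u m != 0) -> size g = size f -> (forall m, g`_m = (u m)%:P%:P%:P * f`_m) ->
  msum g F = msum f F.
Proof.
move=> u0 gf gE; rewrite /msum gf; apply: eq_bigr => m _; rewrite gE size_Cmul ?polyC_eq0 //.
apply: eq_bigr => l _; rewrite coefCM size_Cmul ?polyC_eq0 //.
by apply: eq_bigr => j _; rewrite coefCM size_Cmul ?polyC_eq0.
Qed.

Lemma bracket_cst_mono a b c n s t i1 j1 l1 m1 i2 j2 l2 m2 : s != 0 -> t != 0 ->
  bracket a b c n (cst s * mono i1 j1 l1 m1) (cst t * mono i2 j2 l2 m2) =
  cst (s * t) * mbracket a b c n i1 j1 l1 m1 i2 j2 l2 m2.
Proof.
have jcoef_cst_mono u i0 j0 l0 m0 i j l m :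
    jcoef (cst u * mono i0 j0 l0 m0) i j l m = u * [&& i == i0, j == j0, l == l0 & m == m0]%:R.
  by rewrite jcoef_cstM jcoef_mono.
move=> s0 t0; rewrite bracket_msum (msum_single (i0 := i1) (j0 := j1) (l0 := l1) (m0 := m1)).
- rewrite (msum_single (i0 := i2) (j0 := j2) (l0 := l2) (m0 := m2)).
  + by rewrite !jcoef_cst_mono !eqxx !mulr1.
  + by rewrite jcoef_cst_mono !eqxx mulr1.
  + move=> i j l m /negPf off.
    by rewrite [jcoef (cst t * _) _ _ _ _]jcoef_cst_mono off !mulr0 cst0M.
- by rewrite jcoef_cst_mono !eqxx mulr1.
move=> i j l m /negPf off; rewrite /msum; do 4!apply: big1 => ? _.
by rewrite [jcoef (cst s * _) _ _ _ _]jcoef_cst_mono off mulr0 mul0r cst0M.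
Qed.

Lemma bracket_mono a b c n i1 j1 l1 m1 i2 j2 l2 m2 :
  bracket a b c n (mono i1 j1 l1 m1) (mono i2 j2 l2 m2) =
  mbracket a b c n i1 j1 l1 m1 i2 j2 l2 m2.
Proof.
rewrite -[mono i1 _ _ _]cst1M -[mono i2 _ _ _]cst1M bracket_cst_mono ?oner_neq0 //.
by rewrite mulr1 cst1M.
Qed.

End Monomials.

(** * Rescaling B *)

Section RescaleB.
Variables (C : numClosedFieldType) (mu : C).
Hypothesis mu0 : mu != 0.
Local Notation Jt := (Jt C).
Local Notation mono := (mono C).

Definition scaleB (f : Jt) : Jt := f \Po (cst mu * 'X).

Lemma coef_scaleB (f : Jt) m : (scaleB f)`_m = (mu ^+ m)%:P%:P%:P * f`_m.
Proof. by rewrite /scaleB /cst coef_comp_polyCX !polyC_exp. Qed.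

Lemma jcoef_scaleB (f : Jt) i j l m : jcoef (scaleB f) i j l m = mu ^+ m * jcoef f i j l m.
Proof. by rewrite /jcoef coef_scaleB !coefCM. Qed.

Lemma size_scaleB (f : Jt) : size (scaleB f) = size f.
Proof. by rewrite size_comp_poly2 // size_Cmul ?size_polyX // /cst !polyC_eq0. Qed.

Lemma scaleBD (f g : Jt) : scaleB (f + g) = scaleB f + scaleB g.
Proof. exact: comp_polyD. Qed.

Lemma scaleBM (f g : Jt) : scaleB (f * g) = scaleB f * scaleB g.
Proof. exact: comp_polyM. Qed.

Lemma scaleB_sum (I : Type) (r : seq I) (P : pred I) (F : I -> Jt) :
  scaleB (\sum_(i <- r | P i) F i) = \sum_(i <- r | P i) scaleB (F i).
Proof. exact: raddf_sum. Qed.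

Lemma scaleB_const (p : {poly {poly {poly C}}}) : scaleB p%:P = p%:P.
Proof. exact: comp_polyC. Qed.

Lemma scaleB_cstM s (f : Jt) : scaleB (cst s * f) = cst s * scaleB f.
Proof. by rewrite scaleBM scaleB_const. Qed.

Lemma scaleB_mono i j l m : scaleB (mono i j l m) = cst (mu ^+ m) * mono i j l m.
Proof.
apply: jcoef_ext => i' j' l' m'; rewrite jcoef_scaleB jcoef_cstM !jcoef_mono.
by have [->|] := eqVneq m' m; rewrite ?andbF ?mulr0.
Qed.

Lemma scaleB_dE4 (f : Jt) : scaleB (dE4 f) = dE4 (scaleB f).
Proof. by apply: jcoef_ext => *; rewrite jcoef_scaleB !jcoef_dE4 jcoef_scaleB mulrnAr. Qed.

Lemma scaleB_dE6 (f : Jt) : scaleB (dE6 f) = dE6 (scaleB f).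
Proof. by apply: jcoef_ext => *; rewrite jcoef_scaleB !jcoef_dE6 jcoef_scaleB mulrnAr. Qed.

Lemma scaleB_dA (f : Jt) : scaleB (dA f) = dA (scaleB f).
Proof. by apply: jcoef_ext => *; rewrite jcoef_scaleB !jcoef_dA jcoef_scaleB mulrnAr. Qed.

Lemma dB_scaleB (f : Jt) : dB (scaleB f) = cst mu * scaleB (dB f).
Proof.
apply: jcoef_ext => i j l m; rewrite jcoef_cstM jcoef_dB !jcoef_scaleB jcoef_dB.
by rewrite exprS !mulrnAr mulrA.
Qed.

Lemma scaleB_Sder a b (f : Jt) : scaleB (Sder a b f) = Sder (a * mu) (b / mu) (scaleB f).
Proof.
have scaleB_E4A : scaleB (cst b * vE4 C * vA C) = cst b * vE4 C * vA C.
  by rewrite !scaleBM !scaleB_const.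
rewrite /Sder (morph_sum4 _ _ _ _ _ _ _ _ scaleBD scaleBM).
congr (_ * _ + _ * _ + _ * _ + _).
- exact: scaleB_dE4.
- by rewrite scaleBM !scaleB_const.
- exact: scaleB_dE6.
- by rewrite /vE4 -rmorphXn scaleBM !scaleB_const.
- exact: scaleB_dA.
- by rewrite scaleBM scaleB_const [scaleB _]comp_polyX cstM mulrA.
rewrite dB_scaleB scaleB_E4A.
have -> : cst b = cst (b / mu) * cst mu by rewrite -cstM divfK.
move: (scaleB (dB f)) (cst mu) (cst (b / mu)) (vE4 C) (vA C) => X u v x y.
ring.
Qed.

Lemma scaleB_iter_Sder a b r (f : Jt) :
  scaleB (iter r (Sder a b) f) = iter r (Sder (a * mu) (b / mu)) (scaleB f).
Proof. by elim: r => //= r IH; rewrite scaleB_Sder IH. Qed.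

Lemma scaleB_hbracket a b c n k p l q (f g : Jt) :
  scaleB (hbracket a b c n k p l q f g) =
  hbracket (a * mu) (b / mu) c n k p l q (scaleB f) (scaleB g).
Proof.
rewrite /hbracket scaleB_sum; apply: eq_bigr => r _.
by rewrite scaleB_cstM scaleBM !scaleB_iter_Sder.
Qed.

Lemma scaleB_mbracket a b c n i1 j1 l1 m1 i2 j2 l2 m2 :
  scaleB (mbracket a b c n i1 j1 l1 m1 i2 j2 l2 m2) =
  cst (mu ^+ m1 * mu ^+ m2) * mbracket (a * mu) (b / mu) c n i1 j1 l1 m1 i2 j2 l2 m2.
Proof. by rewrite /mbracket scaleB_hbracket !scaleB_mono hbracket_cstM. Qed.

Lemma scaleB_msum (f : Jt) (F : nat -> nat -> nat -> nat -> Jt) :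
  scaleB (msum f F) = msum f (fun i j l m => scaleB (F i j l m)).
Proof.
rewrite /msum scaleB_sum; apply: eq_bigr => m _; rewrite scaleB_sum.
apply: eq_bigr => l _; rewrite scaleB_sum; apply: eq_bigr => j _; exact: scaleB_sum.
Qed.

Lemma scaleB_bracket a b c n (f g : Jt) :
  scaleB (bracket a b c n f g) = bracket (a * mu) (b / mu) c n (scaleB f) (scaleB g).
Proof.
have mu_m m : mu ^+ m != 0 by rewrite expf_neq0.
rewrite !bracket_msum (msum_scaled _ mu_m (size_scaleB f) (coef_scaleB f)) scaleB_msum.
apply: eq_msum => i1 j1 l1 m1.
rewrite (msum_scaled _ mu_m (size_scaleB g) (coef_scaleB g)) scaleB_msum.
apply: eq_msum => i2 j2 l2 m2.
by rewrite scaleB_cstM scaleB_mbracket !jcoef_scaleB cstMA; congr (cst _ * _); ring.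
Qed.

End RescaleB.

Lemma modiso_rescale (C : numClosedFieldType) (a b c mu : C) :
  mu != 0 -> modiso (a, b, c) (a * mu, b / mu, c).
Proof.
move=> mu0; exists (scaleB mu); split.
- exists (scaleB mu^-1) => f; apply: jcoef_ext => i j l m.
    by rewrite !jcoef_scaleB mulrA -exprMn mulVf // expr1n mul1r.
  by rewrite !jcoef_scaleB mulrA -exprMn mulfV // expr1n mul1r.
- exact: scaleBD.
- exact: scaleB_cstM.
- by move=> k p f hf i j l m; rewrite jcoef_scaleB mulf_eq0 negb_or => /andP[_ /hf].
- exact: scaleB_bracket.
Qed.

(** * Invariants of a modular isomorphism *)

Section ModularIsomorphism.
Variables (C : numClosedFieldType) (a b c a' b' c' : C) (phi : Jt C -> Jt C).
Local Notation mono := (mono C).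
Hypothesis phi_inj : injective phi.
Hypothesis phiD : forall f g, phi (f + g) = phi f + phi g.
Hypothesis phi_cstM : forall s f, phi (cst s * f) = cst s * phi f.
Hypothesis phi_homog : forall k p f, homog k p f -> homog k p (phi f).
Hypothesis phi_bracket :
  forall n f g, phi (bracket a b c n f g) = bracket a' b' c' n (phi f) (phi g).

Definition eigen_mono (x : C) i j l m :=
  x != 0 /\ phi (mono i j l m) = cst x * mono i j l m.

Lemma phi0 : phi 0 = 0.
Proof. by have := phi_cstM 0 0; rewrite !cst0M. Qed.

Lemma eigen_sole_mono i j l m : sole_mono i j l m -> exists x, eigen_mono x i j l m.
Proof.
move=> sole; have := homog_sole_mono sole (phi_homog (@homog_mono _ i j l m)).
set x := jcoef _ _ _ _ _ => phiE; exists x; split=> //.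
apply: contra_neq (@mono_neq0 _ i j l m) => x0.
by apply: phi_inj; rewrite phiE x0 cst0M phi0.
Qed.

Lemma phi_mbracket n x y i1 j1 l1 m1 i2 j2 l2 m2 :
  eigen_mono x i1 j1 l1 m1 -> eigen_mono y i2 j2 l2 m2 ->
  phi (mbracket a b c n i1 j1 l1 m1 i2 j2 l2 m2) =
  cst (x * y) * mbracket a' b' c' n i1 j1 l1 m1 i2 j2 l2 m2.
Proof.
by move=> [x0 phi1] [y0 phi2]; rewrite -bracket_mono phi_bracket phi1 phi2 bracket_cst_mono.
Qed.

Lemma eigen_monoM x y i1 j1 l1 m1 i2 j2 l2 m2 :
  eigen_mono x i1 j1 l1 m1 -> eigen_mono y i2 j2 l2 m2 ->
  eigen_mono (x * y) (i1 + i2) (j1 + j2) (l1 + l2) (m1 + m2).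
Proof.
move=> e1 e2; split; first by rewrite mulf_neq0 ?e1.1 ?e2.1.
by have := phi_mbracket 0 e1 e2; rewrite /mbracket !hbracket0 !monoM.
Qed.

Lemma eigen_two_terms s1 s2 t1 t2 y x1 x2 i1 j1 l1 m1 i2 j2 l2 m2 :
  eigen_mono x1 i1 j1 l1 m1 -> eigen_mono x2 i2 j2 l2 m2 ->
  (i1, j1, l1, m1) != (i2, j2, l2, m2) ->
  phi (cst s1 * mono i1 j1 l1 m1 + cst s2 * mono i2 j2 l2 m2) =
    cst y * (cst t1 * mono i1 j1 l1 m1 + cst t2 * mono i2 j2 l2 m2) ->
  s1 * x1 = y * t1 /\ s2 * x2 = y * t2.
Proof.
move=> [_ phi1] [_ phi2] ne; rewrite -> phiD, !phi_cstM, phi1, phi2, mulrDr, !cstMA.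
by move=> /(cst_mono2_inj ne).
Qed.

Lemma modiso_invariants : exists beta mu : C,
  [/\ beta != 0, mu != 0, c = c', a * mu = a' * beta & b * beta = b' * mu].
Proof.
have [alpha eE4] := eigen_sole_mono sole_monoE4.
have [gamma eE6] := eigen_sole_mono sole_monoE6.
have [beta eA] := eigen_sole_mono sole_monoA.
have [mu eB] := eigen_sole_mono sole_monoB.
have eE4E4E4 : eigen_mono (alpha * (alpha * alpha)) 3 0 0 0 :=
  eigen_monoM eE4 (eigen_monoM eE4 eE4).
have eE6E6 : eigen_mono (gamma * gamma) 0 2 0 0 := eigen_monoM eE6 eE6.
have eE4B : eigen_mono (alpha * mu) 1 0 0 1 := eigen_monoM eE4 eB.
have eE6A : eigen_mono (gamma * beta) 0 1 1 0 := eigen_monoM eE6 eA.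
have eE4E4A : eigen_mono (alpha * (alpha * beta)) 2 0 1 0 :=
  eigen_monoM eE4 (eigen_monoM eE4 eA).
have eE6B : eigen_mono (gamma * mu) 0 1 0 1 := eigen_monoM eE6 eB.
have := phi_mbracket 1 eE4 eE6; rewrite (mbracket1_E4E6 a b c) (mbracket1_E4E6 a' b' c').
move=> /(eigen_two_terms eE4E4E4 eE6E6 isT) [rE4E4E4 rE6E6].
have := phi_mbracket 1 eE4 eA; rewrite (mbracket1_E4A a b c) (mbracket1_E4A a' b' c').
move=> /(eigen_two_terms eE4B eE6A isT) [rE4B rE6A].
have := phi_mbracket 1 eE4 eB; rewrite (mbracket1_E4B a b c) (mbracket1_E4B a' b' c').
move=> /(eigen_two_terms eE4E4A eE6B isT) [rE4E4A _].
have [alpha0 gamma0 beta0 mu0] := And4 eE4.1 eE6.1 eA.1 eB.1.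
have [n2 n2' n3 n4] : [/\ (2 : C) != 0, (- 2 : C) != 0, (3 : C) != 0 & (4 : C) != 0].
  by rewrite oppr_eq0 !pnatr_eq0.
have gamma_alpha : gamma = alpha.
  by apply: (eq_of_scaled_subr (mulf_neq0 n2 gamma0) _ rE6E6); ring.
rewrite gamma_alpha in rE4E4E4 rE6A.
have alpha1 : alpha = 1.
  by apply: (eq_of_scaled_subr (mulf_neq0 n2' (mulf_neq0 alpha0 alpha0)) _ rE4E4E4); ring.
rewrite alpha1 in rE4B rE6A rE4E4A.
exists beta, mu; split => //.
- by apply: (eq_of_scaled_subr (mulf_neq0 beta0 (invr_neq0 n3)) _ rE6A); ring.
- by apply: (eq_of_scaled_subr n4 _ rE4B); ring.
- by apply: (eq_of_scaled_subr n4 _ rE4E4A); ring.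
Qed.

End ModularIsomorphism.

Lemma canonical_triple_rigid (C : numClosedFieldType) (a b c a' b' c' beta mu : C) :
  canonical_triple (a, b, c) -> canonical_triple (a', b', c') -> beta != 0 -> mu != 0 ->
  c = c' -> a * mu = a' * beta -> b * beta = b' * mu -> (a, b, c) = (a', b', c').
Proof.
move=> + + beta0 mu0 <-.
case=> [->|[][-> ->]] [->|[][-> ->]]; rewrite ?mul0r ?mul1r //.
  by move=> -> /(mulIf beta0) ->.
all: move=> /eqP ea /eqP eb; by rewrite ?(eq_sym 0) ?(negPf mu0) ?(negPf beta0) in ea eb.
Qed.

Theorem mainTheorem2 (C : numClosedFieldType) :
  (forall a' b' c' : C,
     (exists b c : C, modiso (a', b', c') (1, b, c))
     \/ (exists c : C, modiso (a', b', c') (0, 1, c))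
     \/ (exists c : C, modiso (a', b', c') (0, 0, c)))
  /\
  (forall t1 t2 : C * C * C,
     canonical_triple t1 -> canonical_triple t2 -> t1 <> t2 -> ~ modiso t1 t2).
Proof.
split=> [a b c | [[a b] c] [[a' b'] c'] ct ct' ne [phi [bij phiD phiZ phiH phiB]]].
  have [a0|a0] := eqVneq a 0; last first.
    left; exists (b / a^-1), c.
    by have := modiso_rescale a b c (invr_neq0 a0); rewrite mulfV.
  have [b0|b0] := eqVneq b 0; rewrite a0; right; [right | left]; exists c.
    by have := modiso_rescale 0 0 c (oner_neq0 C); rewrite b0 mulr1 divr1.
  by have := modiso_rescale 0 b c b0; rewrite mul0r divff.
have [beta [mu [beta0 mu0 cc' ea eb]]] := modiso_invariants (bij_inj bij) phiD phiZ phiH phiB.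
exact: ne (canonical_triple_rigid ct ct' beta0 mu0 cc' ea eb).
Qed.
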